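(* There exist $N_0\in\mathbb{N}$ and $C>0$ such that \[\frac{R^2}{w(B(x,R))}\pi(B(x,R))\le C\Big(\frac{R}{\rho_w(x,\mu)}\Big)^{N_0}\] for all $x\in\mathbb{R}^d$ and all $R\ge\rho_w(x,\mu)$.
   Context: Setting: $d\ge3$; $w\in A_2$ is a weight on $\mathbb{R}^d$, $w(E)=\int_Ew\,dx$, and there exist $\beta>2$, $C>0$ with $w(B(x,tr))\ge Ct^\beta w(B(x,r))$ for all $x$, $r>0$, $t>1$. $\mu$ is a positive Radon measure, $d\pi=w\,d\mu$, with constants $C_0,\delta,C_1>0$ such that (M1) $\frac{r^2}{w(B(x,r))}\pi(B(x,r))\le C_0 (r/R)^\delta \frac{R^2}{w(B(x,R))}\pi(B(x,R))$ for all $x$, $0<r<R$; (M2) $\pi(B(x,2r))\le C_1(\pi(B(x,r))+w(B(x,r))/r^2)$ for all $x$, $r>0$. The critical function is $\rho_w(x,\mu)=\sup\{r>0:\frac{r^2}{w(B(x,r))}\pi(B(x,r))\le C_1\}$. *)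

From HB Require Import structures.
From mathcomp Require Import all_boot all_order all_algebra.
From mathcomp Require Import all_classical all_reals all_analysis.
Set Implicit Arguments. Unset Strict Implicit. Unset Printing Implicit Defensive.
Import Order.TTheory GRing.Theory Num.Theory.
Import numFieldNormedType.Exports.
Local Open Scope classical_set_scope.
Local Open Scope ring_scope.

(* R^d as row vectors, equipped with its Borel sigma-algebra
   (generated by the open sets of the product topology, which is the
   Euclidean topology). *)
Notation Rd R d := (g_sigma_algebraType (@open 'rV[R]_d)).

Definition enorm (R : realType) (d : nat) (y : 'rV[R]_d) : R :=
  Num.sqrt (\sum_(i < d) (y 0 i) ^+ 2).

Definition eball (R : realType) (d : nat) (x : 'rV[R]_d) (r : R) : set (Rd R d) :=
  (fun y : 'rV[R]_d => enorm (y - x) < r).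

Definition box (R : realType) (d : nat) (a b : 'rV[R]_d) : set (Rd R d) :=
  (fun y : 'rV[R]_d => forall i, a 0 i <= y 0 i <= b 0 i).

(* lam is the (Borel) Lebesgue measure on R^d: it is a measure on the Borel
   sets giving each closed box its volume (this determines it uniquely). *)
Definition is_lebesgue (R : realType) (d : nat)
    (lam : {measure set (Rd R d) -> \bar R}) : Prop :=
  forall a b : 'rV[R]_d, (forall i, a 0 i <= b 0 i) ->
    lam (box a b) = (\prod_(i < d) (b 0 i - a 0 i))%:E.

Definition wmeas (R : realType) (d : nat)
    (lam : {measure set (Rd R d) -> \bar R}) (w : Rd R d -> R) (E : set (Rd R d))
    : \bar R :=
  (\int[lam]_(y in E) (w y)%:E)%E.

(* w is an A_2 weight: a nonnegative Borel function such that
   sup_B (avg_B w)(avg_B w^{-1}) < oo over all Euclidean balls B.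
   (Finiteness of this quantity forces local integrability of w and w^{-1}
   and w > 0 a.e.) *)
Definition A2_weight (R : realType) (d : nat)
    (lam : {measure set (Rd R d) -> \bar R}) (w : Rd R d -> R) : Prop :=
  measurable_fun setT w /\ (forall y, 0 <= w y) /\
  exists A : R, forall (x : 'rV[R]_d) (r : R), 0 < r ->
    ((wmeas lam w (eball x r) * (lam (eball x r))^-1) *
     ((\int[lam]_(y in eball x r) ((w y)%:E)^-1) * (lam (eball x r))^-1)
     <= A%:E)%E.

Definition radon (R : realType) (d : nat) (mu : {measure set (Rd R d) -> \bar R})
    : Prop :=
  forall K : set 'rV[R]_d, compact K -> (mu K < +oo)%E.

Definition pimeas (R : realType) (d : nat)
    (mu : {measure set (Rd R d) -> \bar R}) (w : Rd R d -> R) (E : set (Rd R d))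
    : \bar R :=
  (\int[mu]_(y in E) (w y)%:E)%E.

Definition Fquot (R : realType) (d : nat)
    (lam mu : {measure set (Rd R d) -> \bar R}) (w : Rd R d -> R)
    (x : 'rV[R]_d) (r : R) : \bar R :=
  ((r ^+ 2)%:E * (wmeas lam w (eball x r))^-1 * pimeas mu w (eball x r))%E.

Definition rho_w (R : realType) (d : nat)
    (lam mu : {measure set (Rd R d) -> \bar R}) (w : Rd R d -> R) (C1 : R)
    (x : 'rV[R]_d) : \bar R :=
  ereal_sup [set r%:E | r in [set r : R | 0 < r /\ (Fquot lam mu w x r <= C1%:E)%E]].

From HB Require Import structures.
From mathcomp Require Import all_boot all_order all_algebra.
From mathcomp Require Import all_classical all_reals all_analysis.
From mathcomp Require Import ring lra.
Set Implicit Arguments. Unset Strict Implicit. Unset Printing Implicit Defensive.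
Import Order.TTheory GRing.Theory Num.Theory.
Import numFieldNormedType.Exports.
Local Open Scope classical_set_scope.
Local Open Scope ring_scope.

(* Write F(x,r) = r^2 pi(B(x,r)) / w(B(x,r)). Condition M2 together with reverse
   doubling at t = 2, w(B(x,2r)) >= Cw 2^beta w(B(x,r)), gives the doubling step
   F(x,r) <= K ==> F(x,2r) <= D (K + 1) with D = 4 C1 / (Cw 2^beta), hence
   F(x, 2^n r) <= (D + 1)^n (K + 1). Start from a radius r in (rho/2, rho] with
   F(x,r) <= C1, choose n with R < 2^n r and 2^n rho <= 4 R, and transfer the
   bound down to R with M1, which makes F quasi-increasing; if D + 1 <= 2^N then
   (D + 1)^n <= (4 R / rho)^N. *)

Lemma doubling_quotient_real (R : realFieldType) (a q c K w p w2 p2 : R) :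
  0 < a -> 0 < q -> 0 <= c -> 0 <= K -> 0 < w ->
  q * w <= w2 -> p2 <= c * (p + w / a) -> a / w * p <= K ->
  a / w2 * p2 <= c * (K + 1) / q.
Proof.
move=> a_gt0 q_gt0 c_ge0 K_ge0 w_gt0 hw2 hp2 hp.
have w2_gt0 : 0 < w2 by apply: lt_le_trans hw2; rewrite mulr_gt0.
have ap_le : a * p <= K * w by rewrite -ler_pdivrMr // mulrAC.
have ap2_le : a * p2 <= c * (K + 1) * w.
  apply: (le_trans (ler_wpM2l (ltW a_gt0) hp2)).
  have -> : a * (c * (p + w / a)) = c * (a * p + w) by field; rewrite gt_eqF.
  by rewrite -mulrA ler_wpM2l // mulrDl mul1r lerD2r.
rewrite mulrAC ler_pdivrMr // mulrAC ler_pdivlMr //.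
apply: le_trans (ler_wpM2r (ltW q_gt0) ap2_le) _.
rewrite -(mulrA _ w q) [w * q]mulrC.
by apply: ler_wpM2l; rewrite ?mulr_ge0 ?addr_ge0.
Qed.

Lemma doubling_quotient (R : realFieldType) (a q c K : R) (W W2 P P2 : \bar R) :
  0 < a -> 0 < q -> 0 <= c -> 0 <= K ->
  (0 <= W)%E -> (0 <= P)%E -> (0 <= P2)%E ->
  (q%:E * W <= W2)%E -> (P2 <= c%:E * (P + W * (a^-1)%:E))%E ->
  (a%:E * W^-1 * P <= K%:E)%E ->
  (a%:E * W2^-1 * P2 <= (c * (K + 1) / q)%:E)%E.
Proof.
move=> a_gt0 q_gt0 c_ge0 K_ge0 W_ge0 P_ge0 P2_ge0 hW2 hP2 hP.
have bound_ge0 : 0 <= c * (K + 1) / q by rewrite divr_ge0 ?mulr_ge0 ?addr_ge0 // ltW.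
case: W W_ge0 hW2 hP2 hP => [w| |] // w_ge0 hW2 hP2 hP; last first.
  by move: hW2; rewrite gt0_muley ?lte_fin // leye_eq => /eqP->; rewrite invey mule0 mul0e.
(* If W = 0 then W^-1 = +oo, which forces P = 0 and then P2 = 0; recall 0 * +oo = 0. *)
have [w0|w_neq0] := eqVneq w 0.
  have P0 : P = 0.
    apply/eqP; rewrite eq_le P_ge0 andbT; apply: contraTT hP; rewrite -ltNge => P_gt0.
    by rewrite w0 inver eqxx gt0_muley ?lte_fin // gt0_mulye ?ltry.
  have P20 : P2 = 0.
    by apply/eqP; rewrite eq_le P2_ge0 andbT; move: hP2; rewrite P0 w0 mul0e adde0 mule0.
  by rewrite P20 mule0.
have w_gt0 : 0 < w by rewrite lt_def w_neq0 -lee_fin.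
case: P P_ge0 hP2 hP => [p| |] // p_ge0 hP2 hP; last first.
  by move: hP; rewrite inver (negbTE w_neq0) -EFinM gt0_muley ?lte_fin ?divr_gt0.
case: P2 P2_ge0 hP2 => [p2| |] // _ hP2.
case: W2 hW2 => [w2| |] hW2; last 2 first.
- by rewrite invey mule0 mul0e lee_fin.
- by move: hW2; rewrite -EFinM.
have w2_neq0 : w2 != 0 by rewrite gt_eqF // -lte_fin (lt_le_trans _ hW2) // lte_fin mulr_gt0.
move: hW2 hP2 hP; rewrite !inver (negbTE w_neq0) (negbTE w2_neq0).
rewrite -!EFinM !lee_fin.
exact: doubling_quotient_real.
Qed.

Lemma pow2_bracket (R : archiRealFieldType) (r rho x : R) :
  0 < r -> 0 <= rho -> rho <= 2 * r -> rho <= x ->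
  exists n : nat, x < 2 ^+ n * r /\ 2 ^+ n * rho <= 4 * x.
Proof.
move=> r_gt0 rho_ge0 rho_le x_ge.
have [m] : exists m : nat, x < 2 ^+ m * r.
  by exists (Num.Def.archi_bound (x / r)); rewrite -ltr_pdivrMr // upper_nthrootP.
elim: m => [|m IH] x_lt; first by exists 0%N; rewrite expr0 mul1r; split => //; lra.
have [/IH //|x_ge_m] := ltP x (2 ^+ m * r).
exists m.+1; split => //; rewrite exprS.
have := exprn_gt0 m (ltr0Sn R 1); nra.
Qed.

Section DoublingGrowth.
Variables (R : realType) (F : R -> \bar R) (D C0 : R).
Hypotheses (D_ge0 : 0 <= D) (C0_ge0 : 0 <= C0).
Hypothesis F_double : forall r K : R, 0 < r -> 0 <= K ->
  (F r <= K%:E)%E -> (F (2 * r) <= (D * (K + 1))%:E)%E.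
Hypothesis F_quasi_mono : forall s t : R, 0 < s -> s < t -> (F s <= C0%:E * F t)%E.

Lemma iterated_doubling_bound (n : nat) (r K : R) : 0 < r -> 0 <= K -> (F r <= K%:E)%E ->
  (F (2 ^+ n * r) <= ((D + 1) ^+ n * (K + 1) - 1)%:E)%E.
Proof.
move=> r_gt0 K_ge0 hF; elim: n => [|n IH]; first by rewrite !expr0 !mul1r addrK.
have bound_ge1 : 1 <= (D + 1) ^+ n * (K + 1).
  by rewrite mulr_ege1 ?exprn_ege1 // lerDr.
rewrite exprS -mulrA; apply: (le_trans (F_double _ _ IH)).
- by rewrite mulr_gt0 ?exprn_gt0.
- by rewrite subr_ge0.
- by rewrite lee_fin subrK exprS -mulrA mulrDl mul1r -addrA lerDl subr_ge0.
Qed.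

Lemma polynomial_growth (N : nat) (r rho x K : R) :
  D + 1 <= 2 ^+ N -> 0 < r -> 0 < rho -> rho <= 2 * r -> rho <= x ->
  0 <= K -> (F r <= K%:E)%E ->
  (F x <= (C0 * (K + 1) * 4 ^+ N * (x / rho) ^+ N)%:E)%E.
Proof.
move=> hN r_gt0 rho_gt0 rho_le x_ge K_ge0 hF.
have [n [x_lt rho_n]] := pow2_bracket r_gt0 (ltW rho_gt0) rho_le x_ge.
have growth : (D + 1) ^+ n <= 4 ^+ N * (x / rho) ^+ N.
  apply: (@le_trans _ _ ((2 ^+ N) ^+ n)).
    by apply: lerXn2r; rewrite ?nnegrE ?exprn_ge0 ?addr_ge0.
  rewrite exprAC -exprMn; apply: lerXn2r; rewrite ?nnegrE ?exprn_ge0 //.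
  - by rewrite mulr_ge0 // divr_ge0 //; lra.
  - by rewrite mulrA ler_pdivlMr.
apply: (le_trans (F_quasi_mono (lt_le_trans rho_gt0 x_ge) x_lt)).
apply: (le_trans (lee_wpmul2l _ (iterated_doubling_bound n r_gt0 K_ge0 hF))).
  by rewrite lee_fin.
rewrite -EFinM lee_fin -!mulrA ler_wpM2l //.
apply: (@le_trans _ _ ((D + 1) ^+ n * (K + 1))); first by rewrite lerBlDr lerDl.
by rewrite mulrC ler_wpM2l // addr_ge0.
Qed.

End DoublingGrowth.

Section CriticalRadius.
Variables (R : realType) (d : nat) (lam mu : {measure set (Rd R d) -> \bar R}).
Variables (w : Rd R d -> R) (q C0 delta C1 : R).
Hypotheses (w_ge0 : forall y, 0 <= w y) (q_gt0 : 0 < q).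
Hypotheses (C0_ge0 : 0 <= C0) (delta_ge0 : 0 <= delta) (C1_ge0 : 0 <= C1).
Hypothesis wmeas_double : forall (x : 'rV[R]_d) (r : R), 0 < r ->
  (q%:E * wmeas lam w (eball x r) <= wmeas lam w (eball x (2 * r)))%E.
Hypothesis M1 : forall (x : 'rV[R]_d) (r R' : R), 0 < r -> r < R' ->
  (Fquot lam mu w x r <= (C0 * (r / R') `^ delta)%:E * Fquot lam mu w x R')%E.
Hypothesis M2 : forall (x : 'rV[R]_d) (r : R), 0 < r ->
  (pimeas mu w (eball x (2 * r)) <=
   C1%:E * (pimeas mu w (eball x r) + wmeas lam w (eball x r) * ((r ^+ 2)^-1)%:E))%E.

Lemma wmeas_ge0 x r : (0 <= wmeas lam w (eball x r))%E.
Proof. by apply: integral_ge0 => y _; rewrite lee_fin. Qed.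

Lemma pimeas_ge0 x r : (0 <= pimeas mu w (eball x r))%E.
Proof. by apply: integral_ge0 => y _; rewrite lee_fin. Qed.

Lemma Fquot_ge0 x r : (0 <= Fquot lam mu w x r)%E.
Proof.
rewrite /Fquot; apply: mule_ge0; last exact: pimeas_ge0.
by apply: mule_ge0; [rewrite lee_fin sqr_ge0 | rewrite inve_ge0 wmeas_ge0].
Qed.

Lemma Fquot_double x r K : 0 < r -> 0 <= K -> (Fquot lam mu w x r <= K%:E)%E ->
  (Fquot lam mu w x (2 * r) <= (4 * C1 / q * (K + 1))%:E)%E.
Proof.
move=> r_gt0 K_ge0 hF.
have -> : 4 * C1 / q * (K + 1) = 4 * (C1 * (K + 1) / q) by rewrite mulrAC !mulrA.
rewrite /Fquot (_ : (2 * r) ^+ 2 = 4 * r ^+ 2); last by ring.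
rewrite !(EFinM 4) -!muleA; apply: lee_wpmul2l; first by rewrite lee_fin.
rewrite !muleA; apply: (doubling_quotient _ q_gt0 C1_ge0 K_ge0) hF.
- by rewrite exprn_gt0.
- exact: wmeas_ge0.
- exact: pimeas_ge0.
- exact: pimeas_ge0.
- exact: wmeas_double.
- exact: M2.
Qed.

Lemma Fquot_quasi_mono x s t : 0 < s -> s < t ->
  (Fquot lam mu w x s <= C0%:E * Fquot lam mu w x t)%E.
Proof.
move=> s_gt0 st; apply: (le_trans (M1 x s_gt0 st)).
apply: lee_wpmul2r; first exact: Fquot_ge0.
have t_gt0 : 0 < t := lt_trans s_gt0 st.
rewrite lee_fin ler_piMr // -(powRr0 (s / t)); apply: ger_powR => //.
by rewrite divr_gt0 //= ler_pdivrMr // mul1r ltW.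
Qed.

Lemma rho_w_witness x rho : rho_w lam mu w C1 x = rho%:E -> 0 < rho ->
  exists r, [/\ 0 < r, rho <= 2 * r & (Fquot lam mu w x r <= C1%:E)%E].
Proof.
move=> rhoE rho_gt0; have : ((rho / 2)%:E < rho_w lam mu w C1 x)%E.
  by rewrite rhoE lte_fin; lra.
case/ereal_sup_gt => _ [r [r_gt0 hFr] <-]; rewrite lte_fin => rho_lt.
by exists r; split => //; lra.
Qed.

End CriticalRadius.

Theorem lemma2p2 (R : realType) (d : nat) (hd : (3 <= d)%N)
  (lam : {measure set (Rd R d) -> \bar R}) (hlam : is_lebesgue lam)
  (w : Rd R d -> R) (hw : A2_weight lam w)
  (beta Cw : R) (hbeta : 2 < beta) (hCw : 0 < Cw)
  (hrev : forall (x : 'rV[R]_d) (r t : R), 0 < r -> 1 < t ->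
     (wmeas lam w (eball x (t * r)) >= (Cw * t `^ beta)%:E * wmeas lam w (eball x r))%E)
  (mu : {measure set (Rd R d) -> \bar R}) (hmu : radon mu)
  (C0 delta C1 : R) (hC0 : 0 < C0) (hdelta : 0 < delta) (hC1 : 0 < C1)
  (M1 : forall (x : 'rV[R]_d) (r R' : R), 0 < r -> r < R' ->
     (Fquot lam mu w x r <= (C0 * (r / R') `^ delta)%:E * Fquot lam mu w x R')%E)
  (M2 : forall (x : 'rV[R]_d) (r : R), 0 < r ->
     (pimeas mu w (eball x (2 * r)) <=
      C1%:E * (pimeas mu w (eball x r) + wmeas lam w (eball x r) * ((r ^+ 2)^-1)%:E))%E) :
  exists (N0 : nat) (C : R), 0 < C /\
    forall (x : 'rV[R]_d) (R' : R),
      (0 < rho_w lam mu w C1 x)%E -> (rho_w lam mu w C1 x <= R'%:E)%E ->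
      (Fquot lam mu w x R' <= (C * (R' / fine (rho_w lam mu w C1 x)) ^+ N0)%:E)%E.
Proof.
have w_ge0 : forall y, 0 <= w y := hw.2.1.
pose q := Cw * 2 `^ beta.
have q_gt0 : 0 < q by rewrite mulr_gt0 // powR_gt0.
have wmeas_double x r : 0 < r ->
    (q%:E * wmeas lam w (eball x r) <= wmeas lam w (eball x (2 * r)))%E.
  by move=> r_gt0; apply: hrev => //; lra.
pose D := 4 * C1 / q.
have D_ge0 : 0 <= D by rewrite divr_ge0 ?mulr_ge0 // ltW.
have [N hN] : exists N : nat, D + 1 < 2 ^+ N.
  by exists (Num.Def.archi_bound (D + 1)); exact: upper_nthrootP.
exists N, (C0 * (C1 + 1) * 4 ^+ N); split.
  by rewrite !mulr_gt0 ?exprn_gt0 ?addr_gt0.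
move=> x R'; case rhoE : (rho_w lam mu w C1 x) => [rho| |] //=.
rewrite lte_fin lee_fin => rho_gt0 rho_le.
have [r [r_gt0 rho_le2r hFr]] := rho_w_witness rhoE rho_gt0.
apply: (polynomial_growth D_ge0 (ltW hC0) _ _ (ltW hN) r_gt0 rho_gt0 rho_le2r rho_le (ltW hC1) hFr).
- by move=> s K; apply: (Fquot_double w_ge0 q_gt0 (ltW hC1) wmeas_double M2).
- by move=> s t; apply: (Fquot_quasi_mono w_ge0 (ltW hC0) (ltW hdelta) M1).
Qed.
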